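(* For every integer $K\ge2$: $\eta(r,K,1)<1-\frac1K$ for all $r>1$, and $\lim_{r\to\infty}\eta(r,K,1)=1-\frac1K$. For every $r>1$: $\eta(r,K,1)\le\frac{\ln r}{1+\ln r}$ for all integers $K\ge 2$, and $\lim_{K\to\infty}\eta(r,K,1)=\frac{\ln r}{1+\ln r}$.
   Context: Single item auction with one buyer whose value takes values $0<x^1<\dots<x^K$ with probabilities $p^i>0$, $\sum_ip^i=1$. Let $t(x,p)=\max\{i: i\in\arg\max_{1\le k\le K}x^k\sum_{j=k}^Kp^j\}$. The efficiency loss ratio of the revenue-optimal auction is $\mathrm{ELR}_1(x,p)=\sum_{i=1}^{t(x,p)-1}p^ix^i/\sum_{i=1}^Kp^ix^i$. $\eta(r,K,1)$ is the supremum of $\mathrm{ELR}_1(x,p)$ over all such $p$ and all $x$ with $0<x^1<\dots<x^K\le rx^1$. *)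

From Stdlib Require Import Reals List.
From Coquelicot Require Import Coquelicot.
Open Scope R_scope.

(* sumR f m n = f m + f (m+1) + ... + f n  (0 if n < m). *)
Definition sumR (f : nat -> R) (m n : nat) : R :=
  fold_right (fun i acc => f i + acc) 0 (seq m (S n - m)).

(* amax f n = the LARGEST index k in {1,...,n} maximizing f k (n >= 1). *)
Fixpoint amax (f : nat -> R) (n : nat) : nat :=
  match n with
  | O => O
  | S O => 1%nat
  | S m => let a := amax f m in
           if Rle_dec (f a) (f (S m)) then S m else a
  end.

(* Values x^1..x^K and probabilities p^1..p^K (indices 1..K). *)
Definition revenue (x p : nat -> R) (K k : nat) : R := x k * sumR p k K.

Definition tidx (x p : nat -> R) (K : nat) : nat := amax (revenue x p K) K.

Definition ELR1 (x p : nat -> R) (K : nat) : R :=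
  sumR (fun i => p i * x i) 1 (tidx x p K - 1) / sumR (fun i => p i * x i) 1 K.

Definition admissible (r : R) (K : nat) (x p : nat -> R) : Prop :=
  (forall i, (1 <= i <= K)%nat -> 0 < p i) /\
  sumR p 1 K = 1 /\
  0 < x 1%nat /\
  (forall i, (1 <= i < K)%nat -> x i < x (S i)) /\
  x K <= r * x 1%nat.

Definition eta (r : R) (K : nat) : Rbar :=
  Lub_Rbar (fun e => exists x p, admissible r K x p /\ e = ELR1 x p K).

From Stdlib Require Import Reals List Lia Lra.
From Coquelicot Require Import Coquelicot.
Open Scope R_scope.

(* Let t be the optimal reserve index and R = x^t (p^t + ... + p^K) the optimal revenue.
   Optimality of t against every other index gives, by Abel summation,
   p^1 x^1 + ... + p^(t-1) x^(t-1) <= R F(t) for any potential F with F(1) = 0 and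
   F(k+1) - F(k) >= 1 - x^k / x^(k+1); since the served buyers contribute at least R to the
   welfare, ELR <= F(t) / (1 + F(t)).  The potentials (k-1)(1-1/r) and ln(x^k/x^1) give
   ELR <= m(1-1/r) / (1 + m(1-1/r)) < 1 - 1/K and ELR <= ln r / (1 + ln r), with m = K - 1.
   Conversely, the values x^k = q^(k-1) with q^m = r under the equal-revenue distribution
   make every price optimal, so t = K and ELR = m(1-1/q) / (m(1-1/q) + 1), which is at least
   m ln r / (m ln r + m + ln r).  This lower bound tends to 1 - 1/K as r -> oo and to
   ln r / (1 + ln r) as K -> oo, squeezing eta. *)

Lemma nat_ind_down (P : nat -> Prop) (n m : nat) : (m <= S n)%nat ->
  P (S n) -> (forall k, (k <= n)%nat -> P (S k) -> P k) -> P m.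
Proof.
  intros Hm Hn Hstep. remember (S n - m)%nat as k eqn:Hk. revert m Hm Hk.
  induction k as [|k IH]; intros m Hm Hk.
  - now replace m with (S n) by lia.
  - apply Hstep; [lia|]. apply IH; lia.
Qed.

Lemma fold_right_add_acc (f : nat -> R) (a : R) (l : list nat) :
  fold_right (fun i acc => f i + acc) a l = fold_right (fun i acc => f i + acc) 0 l + a.
Proof. induction l as [|h l IH]; simpl; [ring | rewrite IH; ring]. Qed.

Lemma sumR_empty f m n : (n < m)%nat -> sumR f m n = 0.
Proof. intros H; unfold sumR; replace (S n - m)%nat with 0%nat by lia; reflexivity. Qed.

Lemma sumR_recl f m n : (m <= n)%nat -> sumR f m n = f m + sumR f (S m) n.
Proof.
  intros H; unfold sumR; replace (S n - m)%nat with (S (S n - S m)) by lia; reflexivity.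
Qed.

Lemma sumR_recr f m n : (m <= S n)%nat -> sumR f m (S n) = sumR f m n + f (S n).
Proof.
  intros H; unfold sumR; replace (S (S n) - m)%nat with (S (S n - m)) by lia.
  rewrite seq_S, fold_right_app, fold_right_add_acc; cbn [fold_right].
  replace (m + (S n - m))%nat with (S n) by lia; ring.
Qed.

Lemma sumR_const f c m n : (m <= S n)%nat -> (forall i, (m <= i <= n)%nat -> f i = c) ->
  sumR f m n = INR (S n - m) * c.
Proof.
  intros Hm. pattern m. apply (nat_ind_down _ n m Hm).
  - intros _. rewrite sumR_empty by lia. replace (S n - S n)%nat with 0%nat by lia. simpl; ring.
  - intros k Hk IH Hf. rewrite sumR_recl, IH, Hf by (lia || (intros; apply Hf; lia)).
    replace (S n - k)%nat with (S (S n - S k)) by lia. rewrite S_INR; ring.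
Qed.

Lemma sumR_ge0 f m n : (forall i, (m <= i <= n)%nat -> 0 <= f i) -> 0 <= sumR f m n.
Proof.
  destruct (Nat.le_gt_cases m (S n)) as [Hm|Hm].
  2: { intros _. rewrite sumR_empty by lia. lra. }
  pattern m. apply (nat_ind_down _ n m Hm).
  - intros _. rewrite sumR_empty by lia. lra.
  - intros k Hk IH Hf. rewrite sumR_recl by lia.
    assert (0 <= f k) by (apply Hf; lia).
    assert (0 <= sumR f (S k) n) by (apply IH; intros; apply Hf; lia). lra.
Qed.

Lemma sumR_gt0 f m n : (m <= n)%nat -> (forall i, (m <= i <= n)%nat -> 0 < f i) ->
  0 < sumR f m n.
Proof.
  intros H Hf. rewrite sumR_recl by lia.
  assert (0 < f m) by (apply Hf; lia).
  assert (0 <= sumR f (S m) n) by (apply sumR_ge0; intros; left; apply Hf; lia). lra.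
Qed.

Lemma sumR_split f m j n : (1 <= m <= j)%nat -> (j <= S n)%nat ->
  sumR f m n = sumR f m (j - 1) + sumR f j n.
Proof.
  intros Hmj Hjn. induction j as [|j IH]; [lia|].
  destruct (Nat.eq_dec m (S j)) as [<-|Hne].
  - rewrite (sumR_empty f m (m - 1)) by lia. ring.
  - rewrite IH, (sumR_recl f j n) by lia.
    destruct j as [|j]; [lia|].
    replace (S (S j) - 1)%nat with (S j) by lia. replace (S j - 1)%nat with j by lia.
    rewrite sumR_recr by lia. ring.
Qed.

Lemma amax_spec f n : (1 <= n)%nat ->
  (1 <= amax f n <= n)%nat /\ forall k, (1 <= k <= n)%nat -> f k <= f (amax f n).
Proof.
  induction n as [|n IH]; intros H; [lia|].
  destruct n as [|n].
  - split; [simpl; lia|]. intros k Hk. replace k with 1%nat by lia. simpl; lra.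
  - destruct IH as [Hrange Hmax]; [lia|].
    change (amax f (S (S n))) with
      (if Rle_dec (f (amax f (S n))) (f (S (S n))) then S (S n) else amax f (S n)).
    destruct (Rle_dec (f (amax f (S n))) (f (S (S n)))) as [Hle|Hlt];
      (split; [lia|]); intros k Hk;
      (destruct (Nat.eq_dec k (S (S n))) as [->|]; [lra|]);
      specialize (Hmax k ltac:(lia)); lra.
Qed.

Lemma amax_const f c n : (1 <= n)%nat -> (forall k, (1 <= k <= n)%nat -> f k = c) ->
  amax f n = n.
Proof.
  induction n as [|n IH]; intros H Hf; [lia|].
  destruct n as [|n]; [reflexivity|].
  change (amax f (S (S n))) with
    (if Rle_dec (f (amax f (S n))) (f (S (S n))) then S (S n) else amax f (S n)).
  rewrite IH by (lia || (intros; apply Hf; lia)).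
  rewrite (Hf (S n)), (Hf (S (S n))) by lia.
  destruct (Rle_dec c c); [reflexivity | lra].
Qed.

Lemma Rdiv_le_cross a b c d : 0 < b -> 0 < d -> a * d <= c * b -> a / b <= c / d.
Proof.
  intros Hb Hd H.
  apply (Rmult_le_reg_r (b * d)); [nra|].
  replace (a / b * (b * d)) with (a * d) by (field; lra).
  replace (c / d * (b * d)) with (c * b) by (field; lra). exact H.
Qed.

Lemma Rdiv_lt_cross a b c d : 0 < b -> 0 < d -> a * d < c * b -> a / b < c / d.
Proof.
  intros Hb Hd H.
  apply (Rmult_lt_reg_r (b * d)); [nra|].
  replace (a / b * (b * d)) with (a * d) by (field; lra).
  replace (c / d * (b * d)) with (c * b) by (field; lra). exact H.
Qed.

Lemma ln_le_sub_1 y : 0 < y -> ln y <= y - 1.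
Proof.
  intros Hy. destruct (Req_dec (ln y) 0) as [E|E].
  - assert (y = 1) by (rewrite <- (exp_ln y Hy), E, exp_0; reflexivity). lra.
  - pose proof (exp_ineq1 _ E) as H. rewrite exp_ln in H by lra. lra.
Qed.

Lemma ln_pos r : 1 < r -> 0 < ln r.
Proof. intros Hr. rewrite <- ln_1. apply ln_increasing; lra. Qed.

Lemma inv_in_0_1 r : 1 < r -> 0 < 1 / r < 1.
Proof.
  intros Hr. split; [apply Rdiv_lt_0_compat; lra|].
  rewrite <- (Rdiv_1_r 1) at 2. apply Rdiv_lt_cross; lra.
Qed.

Section UpperBound.

Variables (K : nat) (x p : nat -> R).
Hypothesis HK : (1 <= K)%nat.
Hypothesis p_pos : forall i, (1 <= i <= K)%nat -> 0 < p i.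
Hypothesis x1_pos : 0 < x 1%nat.
Hypothesis x_incr : forall i, (1 <= i < K)%nat -> x i < x (S i).

Let t := tidx x p K.
Let opt_revenue := revenue x p K t.

Lemma x_le i j : (1 <= i <= j)%nat -> (j <= K)%nat -> x i <= x j.
Proof.
  induction j as [|j IH]; intros Hij HjK; [lia|].
  destruct (Nat.eq_dec i (S j)) as [->|]; [lra|].
  assert (x i <= x j) by (apply IH; lia).
  assert (x j < x (S j)) by (apply x_incr; lia). lra.
Qed.

Lemma x_pos i : (1 <= i <= K)%nat -> 0 < x i.
Proof. intros Hi. pose proof (x_le 1 i ltac:(lia) ltac:(lia)). lra. Qed.

Lemma tail_prob_ge0 j : (1 <= j)%nat -> 0 <= sumR p j K.
Proof. intros Hj. apply sumR_ge0. intros; left; apply p_pos; lia. Qed.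

Lemma tidx_spec :
  (1 <= t <= K)%nat /\ forall k, (1 <= k <= K)%nat -> revenue x p K k <= opt_revenue.
Proof. apply amax_spec, HK. Qed.

Lemma opt_revenue_pos : 0 < opt_revenue.
Proof.
  destruct tidx_spec as [Ht _]. apply Rmult_lt_0_compat.
  - apply x_pos; lia.
  - apply sumR_gt0; [lia|]. intros; apply p_pos; lia.
Qed.

(* Going from j to j+1 moves the mass sumR p (j+1) K down by x (j+1) - x j, which by optimality
   of t costs at most opt_revenue * (1 - x j / x (j+1)). *)
Lemma welfare_prefix_le_potential (F : nat -> R) :
  F 1%nat = 0 ->
  (forall j, (1 <= j < K)%nat -> 1 - x j / x (S j) <= F (S j) - F j) ->
  forall j, (1 <= j <= K)%nat ->
    sumR (fun i => p i * x i) 1 (j - 1) + sumR p j K * x j <= opt_revenue * (1 + F j).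
Proof.
  intros F1 Fstep. destruct tidx_spec as [_ Hopt].
  induction j as [|j IH]; intros Hj; [lia|].
  destruct j as [|j].
  - rewrite sumR_empty, F1 by lia. specialize (Hopt 1%nat ltac:(lia)).
    unfold revenue in Hopt. lra.
  - specialize (IH ltac:(lia)). specialize (Fstep (S j) ltac:(lia)).
    specialize (Hopt (S (S j)) ltac:(lia)). unfold revenue in Hopt.
    replace (S (S j) - 1)%nat with (S j) by lia.
    replace (S j - 1)%nat with j in IH by lia.
    rewrite sumR_recr by lia. rewrite (sumR_recl p (S j) K) in IH by lia.
    set (S2 := sumR p (S (S j)) K) in *.
    assert (Hx : 0 < x (S (S j))) by (apply x_pos; lia).
    assert (Hmove : S2 * (x (S (S j)) - x (S j)) =
                    x (S (S j)) * S2 * (1 - x (S j) / x (S (S j)))) by (field; lra).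
    assert (Hstep : 0 <= 1 - x (S j) / x (S (S j))).
    { assert (x (S j) < x (S (S j))) by (apply x_incr; lia).
      replace (1 - x (S j) / x (S (S j))) with ((x (S (S j)) - x (S j)) / x (S (S j)))
        by (field; lra).
      apply Rdiv_le_0_compat; lra. }
    assert (HS2 : 0 <= S2) by (apply tail_prob_ge0; lia).
    assert (S2 * (x (S (S j)) - x (S j)) <= opt_revenue * (F (S (S j)) - F (S j)))
      by (rewrite Hmove; apply Rmult_le_compat; nra).
    nra.
Qed.

Lemma revenue_le_tail_welfare m : (1 <= m <= S K)%nat ->
  x m * sumR p m K <= sumR (fun i => p i * x i) m K.
Proof.
  intros [Hm HmK]. revert Hm. pattern m. apply (nat_ind_down _ K m HmK).
  - intros _. rewrite !sumR_empty by lia. lra.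
  - intros k Hk IH Hk1. specialize (IH ltac:(lia)). rewrite !(sumR_recl _ k K) by lia.
    assert (x k * sumR p (S k) K <= x (S k) * sumR p (S k) K).
    { destruct (Nat.eq_dec k K) as [->|].
      - rewrite sumR_empty by lia. lra.
      - apply Rmult_le_compat_r; [apply tail_prob_ge0; lia | apply x_le; lia]. }
    nra.
Qed.

Lemma ELR1_le_potential (F : nat -> R) (B : R) :
  F 1%nat = 0 ->
  (forall j, (1 <= j < K)%nat -> 1 - x j / x (S j) <= F (S j) - F j) ->
  0 <= B -> F t <= B -> ELR1 x p K <= B / (1 + B).
Proof.
  intros F1 Fstep HB HFt. destruct tidx_spec as [Ht _].
  pose proof (welfare_prefix_le_potential F F1 Fstep t Ht) as Hprefix.
  pose proof (revenue_le_tail_welfare t ltac:(lia)) as Htail.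
  pose proof opt_revenue_pos as Hopt.
  unfold ELR1. fold t.
  rewrite (sumR_split _ 1 t K) by lia.
  set (L := sumR (fun i => p i * x i) 1 (t - 1)) in *.
  set (T := sumR (fun i => p i * x i) t K) in *.
  assert (HL : 0 <= L).
  { apply sumR_ge0. intros i Hi. apply Rmult_le_pos; left; [apply p_pos | apply x_pos]; lia. }
  assert (HLB : L <= opt_revenue * B).
  { assert (opt_revenue * F t <= opt_revenue * B) by (apply Rmult_le_compat_l; lra).
    unfold opt_revenue, revenue in *. nra. }
  apply Rdiv_le_cross; [unfold opt_revenue, revenue in *; lra | lra |].
  unfold opt_revenue, revenue in *. nra.
Qed.

Variables (r : R).
Hypothesis r_gt_1 : 1 < r.
Hypothesis xK_le : x K <= r * x 1%nat.

Lemma ELR1_le_linear :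
  ELR1 x p K <= INR (K - 1) * (1 - 1 / r) / (1 + INR (K - 1) * (1 - 1 / r)).
Proof.
  pose proof (inv_in_0_1 r r_gt_1) as Hr.
  destruct tidx_spec as [Ht _].
  apply (ELR1_le_potential (fun j => INR (j - 1) * (1 - 1 / r))).
  - simpl; ring.
  - intros j Hj. cbv beta. replace (S j - 1)%nat with (S (j - 1)) by lia.
    rewrite S_INR.
    assert (0 < x j) by (apply x_pos; lia).
    assert (0 < x (S j)) by (apply x_pos; lia).
    assert (x (S j) <= x K) by (apply x_le; lia).
    assert (x 1%nat <= x j) by (apply x_le; lia).
    replace ((INR (j - 1) + 1) * (1 - 1 / r) - INR (j - 1) * (1 - 1 / r)) with (1 - 1 / r)
      by ring.
    assert (1 / r <= x j / x (S j)) by (apply Rdiv_le_cross; nra). lra.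
  - apply Rmult_le_pos; [apply pos_INR | lra].
  - apply Rmult_le_compat_r; [lra|]. apply le_INR; lia.
Qed.

Lemma ELR1_le_log : ELR1 x p K <= ln r / (1 + ln r).
Proof.
  destruct tidx_spec as [Ht _].
  apply (ELR1_le_potential (fun j => ln (x j) - ln (x 1%nat))).
  - ring.
  - intros j Hj.
    assert (0 < x j) by (apply x_pos; lia).
    assert (0 < x (S j)) by (apply x_pos; lia).
    pose proof (ln_le_sub_1 (x j / x (S j)) ltac:(apply Rdiv_lt_0_compat; lra)) as Hln.
    rewrite ln_div in Hln by lra. lra.
  - left. now apply ln_pos.
  - assert (0 < x t) by (apply x_pos; lia).
    assert (x t <= x K) by (apply x_le; lia).
    assert (Hln : ln (x t) <= ln (r * x 1%nat)) by (apply ln_le; lra).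
    rewrite ln_mult in Hln by lra. lra.
Qed.

End UpperBound.

Definition geometric_values (q : R) (i : nat) : R := q ^ (i - 1).

(* Every price q ^ (k - 1) sells with probability q ^ (1 - k), so all prices give revenue 1 and
   [tidx] picks the highest one. *)
Definition equal_revenue_probs (q : R) (K i : nat) : R :=
  if (i <? K)%nat then (1 - 1 / q) / q ^ (i - 1) else 1 / q ^ (K - 1).

Section Geometric.

Variables (q : R) (K : nat).
Hypothesis q_gt_1 : 1 < q.
Hypothesis HK : (1 <= K)%nat.

Let x := geometric_values q.
Let p := equal_revenue_probs q K.

Lemma pow_q_pos n : 0 < q ^ n.
Proof. apply pow_lt; lra. Qed.

Lemma equal_revenue_probs_lt i : (i < K)%nat -> p i = (1 - 1 / q) / q ^ (i - 1).
Proof. intros Hi. unfold p, equal_revenue_probs. now replace (i <? K)%nat with true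
  by (symmetry; apply Nat.ltb_lt; lia). Qed.

Lemma tail_equal_revenue_probs j : (1 <= j <= K)%nat -> sumR p j K = 1 / q ^ (j - 1).
Proof.
  intros [Hj HjK]. revert Hj. pattern j.
  apply (nat_ind_down _ (K - 1) j ltac:(lia)); replace (S (K - 1)) with K by lia.
  - intros _. rewrite sumR_recl, sumR_empty by lia.
    unfold p, equal_revenue_probs. rewrite Nat.ltb_irrefl. ring.
  - intros k Hk IH Hk1. rewrite sumR_recl, IH, equal_revenue_probs_lt by lia.
    replace (S k - 1)%nat with (S (k - 1)) by lia. simpl pow.
    pose proof (pow_q_pos (k - 1)). field. lra.
Qed.

Lemma tidx_geometric : tidx x p K = K.
Proof.
  apply (amax_const _ 1); [exact HK|]. intros k Hk. unfold revenue.
  rewrite tail_equal_revenue_probs by lia. unfold x, geometric_values.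
  pose proof (pow_q_pos (k - 1)). field. lra.
Qed.

Lemma admissible_geometric : admissible (q ^ (K - 1)) K x p.
Proof.
  pose proof (inv_in_0_1 q q_gt_1).
  unfold x, geometric_values. repeat split.
  - intros i Hi. destruct (Nat.lt_ge_cases i K).
    + rewrite equal_revenue_probs_lt by lia. apply Rdiv_lt_0_compat; [lra | apply pow_q_pos].
    + unfold p, equal_revenue_probs. replace (i <? K)%nat with false
        by (symmetry; apply Nat.ltb_ge; lia).
      apply Rdiv_lt_0_compat; [lra | apply pow_q_pos].
  - rewrite tail_equal_revenue_probs by lia. simpl. field.
  - simpl. lra.
  - intros i Hi. replace (S i - 1)%nat with (S (i - 1)) by lia. simpl pow.
    pose proof (pow_q_pos (i - 1)). nra.
  - simpl. lra.
Qed.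

Lemma ELR1_geometric :
  ELR1 x p K = INR (K - 1) * (1 - 1 / q) / (INR (K - 1) * (1 - 1 / q) + 1).
Proof.
  assert (Hprefix : sumR (fun i => p i * x i) 1 (K - 1) = INR (K - 1) * (1 - 1 / q)).
  { rewrite (sumR_const _ (1 - 1 / q)) by
      (lia || (intros i Hi; rewrite equal_revenue_probs_lt by lia;
               unfold x, geometric_values; pose proof (pow_q_pos (i - 1)); field; lra)).
    do 2 f_equal. lia. }
  assert (Htotal : sumR (fun i => p i * x i) 1 K = INR (K - 1) * (1 - 1 / q) + 1).
  { replace K with (S (K - 1)) at 1 by lia. rewrite sumR_recr, Hprefix by lia.
    replace (S (K - 1)) with K by lia.
    unfold p, x, equal_revenue_probs, geometric_values. rewrite Nat.ltb_irrefl.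
    pose proof (pow_q_pos (K - 1)). field. lra. }
  unfold ELR1. now rewrite tidx_geometric, Hprefix, Htotal.
Qed.

End Geometric.

Lemma admissible_ELR1_ge r K : 1 < r -> (2 <= K)%nat ->
  exists x p, admissible r K x p /\
    INR (K - 1) * ln r / (INR (K - 1) * ln r + INR (K - 1) + ln r) <= ELR1 x p K.
Proof.
  intros Hr HK.
  set (m := INR (K - 1)). set (a := ln r).
  assert (Hm : 1 <= m) by (apply (le_INR 1); lia).
  assert (Ha : 0 < a) by (now apply ln_pos).
  set (u := a / m). assert (Hu : 0 < u) by (apply Rdiv_lt_0_compat; lra).
  set (q := exp u).
  assert (Hq : 1 + u < q) by (apply exp_ineq1; lra).
  assert (Hr_q : q ^ (K - 1) = r).
  { unfold q. rewrite <- Rpower_pow by apply exp_pos. unfold Rpower. rewrite ln_exp.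
    fold m. unfold u. replace (m * (a / m)) with a by (field; lra). apply exp_ln; lra. }
  exists (geometric_values q), (equal_revenue_probs q K). split.
  { rewrite <- Hr_q. apply admissible_geometric; lra || lia. }
  rewrite ELR1_geometric by (lra || lia). fold m.
  (* q >= 1 + u gives 1 - 1/q >= u / (1 + u), and v / (v + 1) is increasing in v *)
  assert (Hlower : m * a / (m * a + m + a) = (m * u / (1 + u)) / (m * u / (1 + u) + 1))
    by (unfold u; field; repeat split; nra).
  rewrite Hlower.
  assert (Hv : m * u / (1 + u) <= m * (1 - 1 / q)).
  { replace (m * (1 - 1 / q)) with (m * (q - 1) / q) by (field; lra).
    apply Rdiv_le_cross; nra. }
  assert (0 <= m * u / (1 + u)) by (apply Rdiv_le_0_compat; nra).
  apply Rdiv_le_cross; nra.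
Qed.

Lemma eta_bounds r K : 1 < r -> (2 <= K)%nat ->
  exists e, eta r K = Finite e /\
    INR (K - 1) * ln r / (INR (K - 1) * ln r + INR (K - 1) + ln r) <= e /\
    e <= INR (K - 1) * (1 - 1 / r) / (1 + INR (K - 1) * (1 - 1 / r)) /\
    e <= ln r / (1 + ln r).
Proof.
  intros Hr HK.
  set (E := fun e => exists x p, admissible r K x p /\ e = ELR1 x p K).
  change (eta r K) with (Lub_Rbar E).
  destruct (Lub_Rbar_correct E) as [Hub Hlub].
  destruct (admissible_ELR1_ge r K Hr HK) as (x & p & Had & Hlo).
  pose proof (Hub (ELR1 x p K) ltac:(now exists x, p)) as Hge.
  assert (Hle : forall B, (forall x p, admissible r K x p -> ELR1 x p K <= B) ->
            Rbar_le (Lub_Rbar E) (Finite B)).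
  { intros B HB. apply Hlub. intros e (x' & p' & Had' & ->). apply HB, Had'. }
  assert (Hlin := Hle _ (fun x' p' '(conj Hp (conj _ (conj Hx1 (conj Hinc HxK)))) =>
    ELR1_le_linear K x' p' ltac:(lia) Hp Hx1 Hinc r Hr HxK)).
  assert (Hlog := Hle _ (fun x' p' '(conj Hp (conj _ (conj Hx1 (conj Hinc HxK)))) =>
    ELR1_le_log K x' p' ltac:(lia) Hp Hx1 Hinc r Hr HxK)).
  destruct (Lub_Rbar E) as [e| |]; simpl in *; try contradiction.
  exists e. repeat split; lra.
Qed.

Lemma is_lim_p_infty_squeeze_ln (f : R -> R) (l : R) :
  (forall r, 1 < r -> l - / ln r <= f r <= l) -> is_lim f p_infty l.
Proof.
  intros Hf.
  apply (is_lim_le_le_loc (fun r => l - / ln r) (fun _ => l)).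
  - exists 1. intros r Hr. now apply Hf.
  - replace (Finite l) with (Finite (l - 0)) by (f_equal; ring).
    apply is_lim_minus'; [apply is_lim_const|].
    apply (is_lim_inv (fun r => ln r) p_infty p_infty); [apply is_lim_ln_p | discriminate].
  - apply is_lim_const.
Qed.

Lemma is_lim_seq_squeeze_inv (u : nat -> R) (l c : R) :
  (forall n, (2 <= n)%nat -> l - c / INR n <= u n <= l) -> is_lim_seq u l.
Proof.
  intros Hu. apply (is_lim_seq_incr_n u 2).
  apply (is_lim_seq_le_le (fun n => l - c * / INR (n + 2)) _ (fun _ => l)).
  - intros n. apply Hu. lia.
  - replace (Finite l) with (Finite (l - c * 0)) by (f_equal; ring).
    apply is_lim_seq_minus'; [apply is_lim_seq_const|].
    apply (is_lim_seq_scal_l _ c 0).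
    apply (is_lim_seq_inv _ p_infty); [|discriminate].
    apply (is_lim_seq_incr_n INR 2). apply is_lim_seq_INR.
  - apply is_lim_seq_const.
Qed.

Lemma one_sub_inv_INR K : (1 <= K)%nat -> 1 - 1 / INR K = INR (K - 1) / (INR (K - 1) + 1).
Proof.
  intros HK. replace (INR K) with (INR (K - 1) + 1) by (rewrite <- S_INR; f_equal; lia).
  pose proof (pos_INR (K - 1)). field. lra.
Qed.

Lemma eta_lt_1_sub_inv r K : 1 < r -> (2 <= K)%nat -> Rbar_lt (eta r K) (1 - 1 / INR K).
Proof.
  intros Hr HK. destruct (eta_bounds r K Hr HK) as (e & -> & _ & Hlin & _).
  rewrite one_sub_inv_INR by lia. simpl.
  pose proof (inv_in_0_1 r Hr). assert (1 <= INR (K - 1)) by (apply (le_INR 1); lia).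
  eapply Rle_lt_trans; [exact Hlin|]. apply Rdiv_lt_cross; nra.
Qed.

Lemma eta_le_ln_ratio r K : 1 < r -> (2 <= K)%nat -> Rbar_le (eta r K) (ln r / (1 + ln r)).
Proof. intros Hr HK. now destruct (eta_bounds r K Hr HK) as (e & -> & _ & _ & Hlog). Qed.

Lemma is_lim_eta_r K : (2 <= K)%nat ->
  is_lim (fun r => real (eta r K)) p_infty (1 - 1 / INR K).
Proof.
  intros HK. apply is_lim_p_infty_squeeze_ln. intros r Hr.
  pose proof (eta_lt_1_sub_inv r K Hr HK) as Hlt.
  destruct (eta_bounds r K Hr HK) as (e & He & Hlo & _); rewrite He in *; simpl in *.
  rewrite one_sub_inv_INR in * by lia.
  set (m := INR (K - 1)) in *. set (a := ln r) in *.
  assert (1 <= m) by (apply (le_INR 1); lia).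
  assert (0 < a) by (now apply ln_pos).
  assert (Hgap : m / (m + 1) - m * a / (m * a + m + a) = m * m / ((m + 1) * (m * a + m + a)))
    by (field; split; nra).
  assert (m * m / ((m + 1) * (m * a + m + a)) <= 1 / a) by (apply Rdiv_le_cross; nra).
  rewrite <- (Rdiv_1_l a). lra.
Qed.

Lemma is_lim_seq_eta_K r : 1 < r -> is_lim_seq (fun K => real (eta r K)) (ln r / (1 + ln r)).
Proof.
  intros Hr. apply (is_lim_seq_squeeze_inv _ _ (ln r)). intros K HK.
  destruct (eta_bounds r K Hr HK) as (e & -> & Hlo & _ & Hlog); simpl.
  replace (INR K) with (INR (K - 1) + 1) by (rewrite <- S_INR; f_equal; lia).
  set (m := INR (K - 1)) in *. set (a := ln r) in *.
  assert (1 <= m) by (apply (le_INR 1); lia).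
  assert (0 < a) by (now apply ln_pos).
  assert (Hgap : a / (1 + a) - m * a / (m * a + m + a) = a * a / ((1 + a) * (m * a + m + a)))
    by (field; split; nra).
  assert (a * (m + 1) <= (1 + a) * (m * a + m + a)) by nra.
  assert (a * a / ((1 + a) * (m * a + m + a)) <= a / (m + 1)) by (apply Rdiv_le_cross; nra).
  lra.
Qed.

Theorem corollary2 :
  (forall K : nat, (2 <= K)%nat ->
     (forall r : R, 1 < r -> Rbar_lt (eta r K) (Finite (1 - 1 / INR K))) /\
     is_lim (fun r => real (eta r K)) p_infty (1 - 1 / INR K)) /\
  (forall r : R, 1 < r ->
     (forall K : nat, (2 <= K)%nat ->
        Rbar_le (eta r K) (Finite (ln r / (1 + ln r)))) /\
     is_lim_seq (fun K => real (eta r K)) (ln r / (1 + ln r))).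
Proof.
  split.
  - intros K HK. split.
    + intros r Hr. now apply eta_lt_1_sub_inv.
    + now apply is_lim_eta_r.
  - intros r Hr. split.
    + intros K HK. now apply eta_le_ln_ratio.
    + now apply is_lim_seq_eta_K.
Qed.
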